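(* Let $\mathcal V$ be a $*$-vector space with a (not necessarily proper) matrix ordering $\{C_n\}_n$. For each $n$ let $J_n=\operatorname{span}(C_n\cap-C_n)\subseteq M_n(\mathcal V)$ and let $J=J_1$. Then $M_n(J)=J_n$ for every $n\in\mathbb N$.
   Context: A (not necessarily proper) matrix ordering is a sequence of cones $C_n\subseteq M_n(\mathcal V)_h$ (hermitian elements) with $\alpha^*C_n\alpha\subseteq C_m$ for all $\alpha\in M_{n,m}$ and all $n,m$. *)

From HB Require Import structures.
From mathcomp Require Import all_boot all_order all_algebra.
From mathcomp Require Import reals complex.
Set Implicit Arguments. Unset Strict Implicit. Unset Printing Implicit Defensive.
Import Order.TTheory GRing.Theory Num.Theory.
Local Open Scope ring_scope.
Local Open Scope complex_scope.

Section Defs.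
Variable R : realType.
Local Notation C := (R[i]).
Variable V : lmodType C.

Definition is_star (star : V -> V) : Prop :=
  (forall v, star (star v) = v) /\
  (forall (a : C) (u v : V), star (a *: u + v) = a^* *: star u + star v).

Definition mxstar (star : V -> V) n (X : 'M[V]_n) : 'M[V]_n :=
  \matrix_(i, j) star (X j i).

Definition hermitian (star : V -> V) n (X : 'M[V]_n) : Prop := mxstar star X = X.

Definition mxscale n (c : C) (X : 'M[V]_n) : 'M[V]_n := \matrix_(i, j) (c *: X i j).

(* alpha^* X alpha for alpha in M_{n,m}(C), X in M_n(V) *)
Definition mxcongr n m (alpha : 'M[C]_(n, m)) (X : 'M[V]_n) : 'M[V]_m :=
  \matrix_(k, l) \sum_(i < n) \sum_(j < n) ((alpha i k)^* * alpha j l) *: X i j.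

Definition is_cone n (K : 'M[V]_n -> Prop) : Prop :=
  K 0 /\ (forall X Y, K X -> K Y -> K (X + Y)) /\
  (forall (t : R) X, 0 <= t -> K X -> K (mxscale (t%:C) X)).

Definition matrix_ordering (star : V -> V) (Cn : forall n, 'M[V]_n -> Prop) : Prop :=
  (forall n, (0 < n)%N -> is_cone (Cn n)) /\
  (forall n X, (0 < n)%N -> Cn n X -> hermitian star X) /\
  (forall n m (alpha : 'M[C]_(n, m)) X, (0 < n)%N -> (0 < m)%N ->
       Cn n X -> Cn m (mxcongr alpha X)).

Definition mxspan n (S : 'M[V]_n -> Prop) (X : 'M[V]_n) : Prop :=
  exists s : seq (C * 'M[V]_n),
    (forall p, p \in s -> S p.2) /\ X = \sum_(p <- s) mxscale p.1 p.2.

Definition Jn (Cn : forall n, 'M[V]_n -> Prop) n : 'M[V]_n -> Prop :=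
  mxspan (fun X => Cn n X /\ Cn n (- X)).

(* J = J_1, viewed as a subset of V via the identification M_1(V) = V *)
Definition J1 (Cn : forall n, 'M[V]_n -> Prop) (v : V) : Prop :=
  @Jn Cn 1%N (const_mx v).

Definition Mn_of n (S : V -> Prop) (X : 'M[V]_n) : Prop := forall i j, S (X i j).

End Defs.
Arguments Jn {R V} Cn n _.
Arguments Mn_of {R V} n S X.

(* Polarization over the fourth roots of unity,
     alpha^* X beta = 1/4 sum_(l^4 = 1) l^* (alpha + l beta)^* X (alpha + l beta),
   writes every compression alpha^* X beta of an X in C_n /\ -C_n as a linear
   combination of congruences of X, which again lie in C_m /\ -C_m; so the map
   X |-> alpha^* X beta sends J_n into J_m.  Taking alpha, beta standard basis
   vectors, this map extracts the entry X_ij (giving M_n(J) from J_n) or places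
   a 1 x 1 matrix at position (i, j) (giving J_n from M_n(J)). *)

From HB Require Import structures.
From mathcomp Require Import all_boot all_order all_algebra.
From mathcomp Require Import reals complex ring.
Import Order.TTheory GRing.Theory Num.Theory.
Local Open Scope ring_scope.
Local Open Scope complex_scope.
Set Implicit Arguments. Unset Strict Implicit. Unset Printing Implicit Defensive.

Section MatrixForms.
Variable R : realType.
Local Notation C := (R[i]).
Variable V : lmodType C.

Definition roots4 : seq C := [:: 1; -1; 'i; - 'i].

Lemma polarization (a b c d : C) :
  \sum_(l <- roots4) l^* * ((a + l * b)^* * (c + l * d)) = 4%:R * (a^* * d).
Proof.
rewrite /roots4 !big_cons big_nil.
case: a b c d => [a1 a2] [b1 b2] [c1 c2] [d1 d2].
by apply/eqP; rewrite eq_complex /=; apply/andP; split; apply/eqP; ring.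
Qed.

Lemma mxscale1 n (X : 'M[V]_n) : mxscale 1 X = X.
Proof. by apply/matrixP => i j; rewrite mxE scale1r. Qed.

Lemma mxscaleA n c d (X : 'M[V]_n) : mxscale c (mxscale d X) = mxscale (c * d) X.
Proof. by apply/matrixP => i j; rewrite !mxE scalerA. Qed.

Lemma mxscale_sum n (I : Type) (r : seq I) c (F : I -> 'M[V]_n) :
  mxscale c (\sum_(x <- r) F x) = \sum_(x <- r) mxscale c (F x).
Proof.
apply/matrixP => i j; rewrite !mxE !summxE scaler_sumr.
by apply: eq_bigr => x _; rewrite mxE.
Qed.

Section Span.
Variables (n : nat) (S : 'M[V]_n -> Prop).

Lemma mxspan0 : mxspan S 0.
Proof. by exists [::]; rewrite big_nil. Qed.

Lemma mxspan_mem X : S X -> mxspan S X.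
Proof.
move=> SX; exists [:: (1, X)]; split; first by move=> p; rewrite inE => /eqP ->.
by rewrite big_seq1 mxscale1.
Qed.

Lemma mxspanD X Y : mxspan S X -> mxspan S Y -> mxspan S (X + Y).
Proof.
move=> [s [Ss ->]] [t [St ->]]; exists (s ++ t); rewrite big_cat; split => // p.
by rewrite mem_cat => /orP [/Ss | /St].
Qed.

Lemma mxspanZ c X : mxspan S X -> mxspan S (mxscale c X).
Proof.
move=> [s [Ss ->]]; exists [seq (c * p.1, p.2) | p <- s]; split.
  by move=> _ /mapP [p /Ss Sp ->].
by rewrite mxscale_sum big_map; apply: eq_bigr => p _; rewrite mxscaleA.
Qed.

Lemma mxspan_sum (I : eqType) (r : seq I) (F : I -> 'M[V]_n) :
  (forall x, x \in r -> mxspan S (F x)) -> mxspan S (\sum_(x <- r) F x).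
Proof.
elim: r => [|x r IHr] SF; first by rewrite big_nil; exact: mxspan0.
rewrite big_cons; apply: mxspanD; first by apply: SF; rewrite mem_head.
by apply: IHr => y ry; apply: SF; rewrite inE ry orbT.
Qed.

End Span.

Lemma mxspan_additive_image n m (S : 'M[V]_n -> Prop) (T : 'M[V]_m -> Prop)
    (f : {additive 'M[V]_n -> 'M[V]_m}) :
  (forall c X, f (mxscale c X) = mxscale c (f X)) ->
  (forall X, S X -> mxspan T (f X)) ->
  forall X, mxspan S X -> mxspan T (f X).
Proof.
move=> fZ fST _ [s [Ss ->]]; rewrite raddf_sum; apply: mxspan_sum => p sp.
by rewrite fZ; apply/mxspanZ/fST/Ss.
Qed.

Definition mxsesq n m (alpha beta : 'M[C]_(n, m)) (X : 'M[V]_n) : 'M[V]_m :=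
  \matrix_(k, l) \sum_(i < n) \sum_(j < n) ((alpha i k)^* * beta j l) *: X i j.

Lemma mxsesq_is_zmod_morphism n m (alpha beta : 'M[C]_(n, m)) :
  zmod_morphism (mxsesq alpha beta).
Proof.
move=> X Y; apply/matrixP => k l; rewrite !mxE -sumrB; apply: eq_bigr => i _.
by rewrite -sumrB; apply: eq_bigr => j _; rewrite !mxE scalerBr.
Qed.

HB.instance Definition _ n m (alpha beta : 'M[C]_(n, m)) :=
  GRing.isZmodMorphism.Build 'M[V]_n 'M[V]_m (mxsesq alpha beta)
    (mxsesq_is_zmod_morphism alpha beta).

Lemma mxsesqZ n m (alpha beta : 'M[C]_(n, m)) c (X : 'M[V]_n) :
  mxsesq alpha beta (mxscale c X) = mxscale c (mxsesq alpha beta X).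
Proof.
apply/matrixP => k l; rewrite !mxE scaler_sumr; apply: eq_bigr => i _.
by rewrite scaler_sumr; apply: eq_bigr => j _; rewrite mxE !scalerA mulrC.
Qed.

Lemma mxcongrN n m (alpha : 'M[C]_(n, m)) (X : 'M[V]_n) :
  mxcongr alpha (- X) = - mxcongr alpha X.
Proof. exact: (raddfN (mxsesq alpha alpha)). Qed.

Lemma mxsesq_polar n m (alpha beta : 'M[C]_(n, m)) (X : 'M[V]_n) :
  mxsesq alpha beta X =
  mxscale 4%:R^-1 (\sum_(l <- roots4) mxscale l^* (mxcongr (alpha + l *: beta) X)).
Proof.
apply/matrixP => k k'; rewrite !mxE summxE scaler_sumr.
under [RHS]eq_bigr => l _ do rewrite !mxE !scaler_sumr.
rewrite [RHS]exchange_big /=; apply: eq_bigr => i _.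
under [RHS]eq_bigr => l _ do rewrite !scaler_sumr.
rewrite [RHS]exchange_big /=; apply: eq_bigr => j _.
under [RHS]eq_bigr => l _ do rewrite !mxE !scalerA -mulrA.
by rewrite -scaler_suml -mulr_sumr polarization mulKf // pnatr_eq0.
Qed.

Lemma sum_delta_scale n (F : 'I_n -> 'I_n -> V) i j :
  \sum_p \sum_q (((p == i) && (q == j))%:R : C) *: F p q = F i j.
Proof.
rewrite (bigD1 i) //= [X in _ + X]big1 ?addr0 => [|p /negbTE ne_pi]; last first.
  by rewrite big1 // => q _; rewrite ne_pi scale0r.
rewrite (bigD1 j) //= big1 ?addr0 => [|q /negbTE ne_qj]; last first.
  by rewrite ne_qj andbF scale0r.
by rewrite !eqxx scale1r.
Qed.

Lemma mxsesq_delta_entry n (X : 'M[V]_n) i j :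
  mxsesq (delta_mx i ord0) (delta_mx j ord0) X = const_mx (X i j) :> 'M[V]_1.
Proof.
apply/matrixP => k l; rewrite !mxE -[RHS]sum_delta_scale; apply: eq_bigr => p _.
apply: eq_bigr => q _.
by rewrite !mxE !ord1 eqxx !andbT rmorph_nat -natrM mulnb.
Qed.

Lemma mxsesq_delta_decomp n (X : 'M[V]_n) :
  X = \sum_i \sum_j
        mxsesq (delta_mx (ord0 : 'I_1) i) (delta_mx ord0 j) (const_mx (X i j)).
Proof.
apply/matrixP => k l; rewrite -[LHS]sum_delta_scale summxE; apply: eq_bigr => i _.
rewrite summxE; apply: eq_bigr => j _; rewrite !mxE !big_ord1 !mxE.
by rewrite eqxx rmorph_nat -natrM mulnb (eq_sym k) (eq_sym l).
Qed.

Section MatrixOrdering.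
Variable Cn : forall n, 'M[V]_n -> Prop.
Arguments Cn : clear implicits.
Hypothesis Cn_congr : forall n m (alpha : 'M[C]_(n, m)) X, (0 < n)%N -> (0 < m)%N ->
  Cn n X -> Cn m (mxcongr alpha X).

Lemma Jn_mxsesq n m (alpha beta : 'M[C]_(n, m)) (X : 'M[V]_n) :
  (0 < n)%N -> (0 < m)%N ->
  Jn Cn n X -> Jn Cn m (mxsesq alpha beta X).
Proof.
move=> n_gt0 m_gt0; apply: mxspan_additive_image => [c Y | Y [CY CNY]].
  exact: mxsesqZ.
rewrite /= mxsesq_polar; apply/mxspanZ/mxspan_sum => l _; apply/mxspanZ/mxspan_mem.
by rewrite -mxcongrN; split; apply: Cn_congr.
Qed.

End MatrixOrdering.
End MatrixForms.

Theorem lemma4p2 (R : realType) (V : lmodType R[i]) (star : V -> V)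
  (Cn : forall n, 'M[V]_n -> Prop) :
  is_star star -> matrix_ordering star Cn ->
  forall n : nat, (0 < n)%N ->
    forall X : 'M[V]_n, Mn_of n (J1 Cn) X <-> Jn Cn n X.
Proof.
move=> _ [_ [_ Cn_congr]] n n_gt0 X; split => [JX | JX i j].
  rewrite (mxsesq_delta_decomp X); apply: mxspan_sum => i _.
  by apply: mxspan_sum => j _; apply: (Jn_mxsesq Cn_congr) => //; apply: JX.
by rewrite /J1 -mxsesq_delta_entry; apply: (Jn_mxsesq Cn_congr).
Qed.
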